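(* In the standing setting, define $g^v$ for $t\in\{1,\dots,\overline R\}$, $k\in\{0,\dots,m\}$, $\delta\in\{0,\dots,N\}$ by $g^v(t,k,\delta)=v(k)-kp_{t-1}$ if $k+\delta\le m$; $g^v(t,k,\delta)=\max_{0\le u\le k\wedge\sigma^v(t)}\sum_{\delta'}K_t(\delta'\mid\delta)\,g^v(t+1,u,\delta')$ if $t<\overline R$ and $k+\delta>m$; $g^v(t,k,\delta)=0$ if $t=\overline R$ and $k+\delta>m$; and $g^v(0,k)=\max_{0\le u\le k}\sum_{\delta'}\mathbb P(\delta(p_0)=\delta')\,g^v(1,u,\delta')$. Then $\varphi^v(0,k)=g^v(0,k)$ for all $k\in\{0,\dots,m\}$, and for all $t\in\{1,\dots,\overline R\}$, $k\in\{0,\dots,m\}$, $\delta\in\{0,\dots,N\}$, $$\varphi^v(t,k,\delta)\le g^v\big(t,k\wedge\sigma^v(t-1),\delta\big)\le\varphi^v\big(t,k\wedge\sigma^v(t-1),\delta\big).$$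
   Context: Standing setting. Integers $n\ge2$, $m\ge1$; $N:=(n-1)m$. Reals $p_{\mathrm{init}}\ge0$, $\Delta P>0$; the price at round $t\ge0$ is $p_t:=p_{\mathrm{init}}+t\Delta P$. The player's valuation $v:\{0,\dots,m\}\to[0,\infty)$ satisfies $v(0)=0$ and is non-decreasing and concave. $\overline R:=\lceil (v(1)-p_{\mathrm{init}})/\Delta P\rceil$, assumed $\ge1$. For $t\ge0$, $\sigma^v(t):=\min\operatorname{argmax}_{0\le u\le m}(v(u)-up_t)$. The opponent is given by random variables $Z_1\ge Z_2\ge\dots\ge Z_N\ge0$ (a.s.) on a probability space $(\Omega,\mathcal F,\mathbb P)$; its demand at price $p$ is $\delta(p):=\sum_{j=1}^N\mathbf 1\{Z_j>p\}$. For $t\ge1$ fix transition kernels $K_t(\delta'\mid\delta)$ ($\delta,\delta'\in\{0,\dots,N\}$), each $K_t(\cdot\mid\delta)$ a probability on $\{0,\dots,\delta\}$, with $K_t(\delta'\mid\delta)=\mathbb P(\delta(p_t)=\delta'\mid\delta(p_{t-1})=\delta)$ whenever $\mathbb P(\delta(p_{t-1})=\delta)>0$. Value function: for $t\in\{1,\dots,\overline R\}$, $k\in\{0,\dots,m\}$, $\delta\in\{0,\dots,N\}$: $\varphi^v(t,k,\delta):=v(k)-kp_{t-1}$ if $k+\delta\le m$; $:=\max_{0\le u\le k}\sum_{\delta'=0}^N K_t(\delta'\mid\delta)\varphi^v(t+1,u,\delta')$ if $k+\delta>m$ and $t<\overline R$; $:=0$ if $k+\delta>m$ and $t=\overline R$.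 Also $\varphi^v(0,k):=\max_{0\le u\le k}\sum_{\delta'}\mathbb P(\delta(p_0)=\delta')\varphi^v(1,u,\delta')$. $a\wedge b:=\min(a,b)$. *)

From HB Require Import structures.
From mathcomp Require Import all_boot all_order all_algebra.
From mathcomp Require Import all_classical all_reals all_analysis.
Set Implicit Arguments. Unset Strict Implicit. Unset Printing Implicit Defensive.
Import Order.TTheory GRing.Theory Num.Theory.
Local Open Scope ring_scope.

Section Defs.
Variable R : realType.

Definition price (pinit dP : R) (t : nat) : R := pinit + t%:R * dP.

Definition maxupto (k : nat) (F : nat -> R) : R :=
  \big[Num.max/F 0%N]_(0 <= u < k.+1) F u.

Definition Rbar (v : nat -> R) (pinit dP : R) : nat :=
  `|Num.ceil ((v 1%N - pinit) / dP)|%N.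

(* sigma^v(t) = min argmax_{0<=u<=m} (v(u) - u p_t) *)
Definition sigmav (m : nat) (v : nat -> R) (pinit dP : R) (t : nat) : nat :=
  let f := fun u : nat => v u - u%:R * price pinit dP t in
  find (fun u => all (fun w => f w <= f u) (iota 0 m.+1)) (iota 0 m.+1).

Definition demand (T : Type) (N : nat) (Z : nat -> T -> R) (p : R) (w : T) : nat :=
  (\sum_(1 <= j < N.+1) (((p < Z j w)%R : bool) : nat))%N.

(* value function phi^v(t,k,delta), by recursion on the remaining fuel Rbar - t.
   K t d' d stands for K_t(d' | d). *)
Fixpoint phi_rec (m N : nat) (v : nat -> R) (pinit dP : R)
    (K : nat -> nat -> nat -> R) (fuel t k d : nat) : R :=
  if (k + d <= m)%N then v k - k%:R * price pinit dP t.-1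
  else match fuel with
       | 0%N => 0
       | fuel'.+1 => maxupto k (fun u =>
            \sum_(d' < N.+1) K t d' d * phi_rec m N v pinit dP K fuel' t.+1 u d')
       end.

Definition phi m N v pinit dP K (t k d : nat) : R :=
  phi_rec m N v pinit dP K (Rbar v pinit dP - t) t k d.

Fixpoint g_rec (m N : nat) (v : nat -> R) (pinit dP : R)
    (K : nat -> nat -> nat -> R) (fuel t k d : nat) : R :=
  if (k + d <= m)%N then v k - k%:R * price pinit dP t.-1
  else match fuel with
       | 0%N => 0
       | fuel'.+1 => maxupto (minn k (sigmav m v pinit dP t)) (fun u =>
            \sum_(d' < N.+1) K t d' d * g_rec m N v pinit dP K fuel' t.+1 u d')
       end.

Definition gv m N v pinit dP K (t k d : nat) : R :=
  g_rec m N v pinit dP K (Rbar v pinit dP - t) t k d.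

End Defs.

From HB Require Import structures.
From mathcomp Require Import all_boot all_order all_algebra.
From mathcomp Require Import all_classical all_reals all_analysis.
From mathcomp Require Import lra.
Import Order.TTheory GRing.Theory Num.Theory.
Set Implicit Arguments. Unset Strict Implicit.
Local Open Scope classical_set_scope.
Local Open Scope ring_scope.

(* Prices increase, so the myopic optimum sigma(t) of u |-> v(u) - u p_t is
   non-increasing in t, and every payoff reachable from round t is at most the
   myopic value at round t - 1.  By induction on the remaining rounds, a
   quantity u kept in round t can therefore be replaced by u /\ sigma(t)
   without lowering the value: this gives phi <= g at the truncated holding,
   while g <= phi holds since g maximises over fewer quantities. *)

Section Maxupto.
Variable R : realType.

Lemma maxupto_le (k : nat) (F : nat -> R) (c : R) :
  (forall u, (u <= k)%N -> F u <= c) -> maxupto k F <= c.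
Proof.
move=> Fc; rewrite /maxupto big_seq; apply: bigmax_le => [|u]; first exact: Fc.
by rewrite mem_index_iota ltnS => /andP[_ /Fc].
Qed.

Lemma le_maxupto (k u : nat) (F : nat -> R) :
  (u <= k)%N -> F u <= maxupto k F.
Proof. by move=> uk; apply: le_bigmax_seq; rewrite // mem_index_iota ltnS. Qed.

Lemma maxupto_le_maxupto (k k' : nat) (F G : nat -> R) :
  (forall u, (u <= k)%N -> exists2 u', (u' <= k')%N & F u <= G u') ->
  maxupto k F <= maxupto k' G.
Proof.
move=> FG; apply: maxupto_le => u /FG[u' u'k' FGu].
exact: le_trans FGu (le_maxupto _ u'k').
Qed.

Lemma ler_weighted_sum (N : nat) (w x y : nat -> R) :
  (forall i, 0 <= w i) -> (forall i, (i <= N)%N -> x i <= y i) ->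
  \sum_(i < N.+1) w i * x i <= \sum_(i < N.+1) w i * y i.
Proof.
by move=> w0 xy; apply: ler_sum => i _; rewrite ler_wpM2l // (xy _ (ltn_ord i)).
Qed.

End Maxupto.

Section Kernel.
Variables (R : realType) (N : nat) (K : nat -> nat -> nat -> R).

Definition stochastic_kernel := forall t dl, (1 <= t)%N -> (dl <= N)%N ->
  (forall dl', 0 <= K t dl' dl) /\
  (forall dl', (dl < dl')%N -> K t dl' dl = 0) /\
  \sum_(dl' < dl.+1) K t dl' dl = 1.

Hypothesis K_stochastic : stochastic_kernel.

Lemma kernel_ge0 t dl : (1 <= t)%N -> (dl <= N)%N -> forall dl', 0 <= K t dl' dl.
Proof. by move=> t1 dlN; have [] := K_stochastic t1 dlN. Qed.

Lemma kernel_sum1 t dl : (1 <= t)%N -> (dl <= N)%N ->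
  \sum_(dl' < N.+1) K t dl' dl = 1.
Proof.
move=> t1 dlN; have [_ [K0 K1]] := K_stochastic t1 dlN.
rewrite -(big_mkord xpredT (fun i => K t i dl)) (big_cat_nat _ (n := dl.+1)) //=.
rewrite big_mkord K1 big_nat_cond big1 ?addr0 // => i /andP[/andP[dli _] _].
exact: K0.
Qed.

Lemma kernel_sum_le t dl (x : nat -> R) (c : R) :
  (1 <= t)%N -> (dl <= N)%N -> (forall i, (i <= N)%N -> x i <= c) ->
  \sum_(dl' < N.+1) K t dl' dl * x dl' <= c.
Proof.
move=> t1 dlN xc.
apply: le_trans (ler_weighted_sum (y := fun=> c) (kernel_ge0 t1 dlN) xc) _.
by rewrite -mulr_suml kernel_sum1 // mul1r.
Qed.

End Kernel.

Section ValueFunctions.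
Variables (R : realType) (m : nat) (v : nat -> R) (pinit dP : R).
Hypothesis dP_gt0 : 0 < dP.

Definition payoff (t u : nat) : R := v u - u%:R * price pinit dP t.

Local Notation sigma := (sigmav m v pinit dP).

Lemma sigmavP t :
  (sigma t <= m)%N /\ forall u, (u <= m)%N -> payoff t u <= payoff t (sigma t).
Proof.
pose opt u := all (fun w => payoff t w <= payoff t u) (iota 0 m.+1).
have [i _ imax] := @arg_maxP _ R 'I_m.+1 ord0 xpredT (fun i => payoff t i) isT.
have has_opt : has opt (iota 0 m.+1).
  apply/hasP; exists (val i); first by rewrite mem_iota ltn_ord.
  by apply/allP => w; rewrite mem_iota add0n => wm; apply: (imax (Ordinal wm)).
have := nth_find 0%N has_opt; move: has_opt; rewrite has_find size_iota => ltm.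
rewrite nth_iota // add0n => /allP sigma_opt; split; first by rewrite -ltnS.
by move=> u um; apply: sigma_opt; rewrite mem_iota add0n ltnS.
Qed.

Lemma sigmav_le t : (sigma t <= m)%N.
Proof. by have [] := sigmavP t. Qed.

Lemma payoff_le_sigmav t u : (u <= m)%N -> payoff t u <= payoff t (sigma t).
Proof. by have [_] := sigmavP t; apply. Qed.

Hypothesis v0 : v 0%N = 0.

Lemma payoff0 t : payoff t 0 = 0.
Proof. by rewrite /payoff v0 mul0r subr0. Qed.

Lemma payoff_sigmav_ge0 t : 0 <= payoff t (sigma t).
Proof. by rewrite -(payoff0 t) payoff_le_sigmav. Qed.

Lemma payoff_nonincreasing s t u : (s <= t)%N -> payoff t u <= payoff s u.
Proof.
move=> st; rewrite lerD2l lerN2 ler_wpM2l // lerD2l.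
by rewrite ler_wpM2r ?ler_nat // ltW.
Qed.

Lemma sigmav_nonincreasing t : (sigma t.+1 <= sigma t)%N.
Proof.
rewrite leqNgt; apply/negP => lt_sigma.
have opt_t := payoff_le_sigmav t (sigmav_le t.+1).
have opt_tS := payoff_le_sigmav t.+1 (sigmav_le t).
have payoffS u : payoff t.+1 u = payoff t u - u%:R * dP.
  by rewrite /payoff /price -addn1 natrD; lra.
have : (sigma t)%:R * dP < (sigma t.+1)%:R * dP by rewrite ltr_pM2r // ltr_nat.
by move: opt_tS; rewrite !payoffS; lra.
Qed.

Variables (N : nat) (K : nat -> nat -> nat -> R).
Hypothesis K_stochastic : stochastic_kernel N K.

Local Notation phi_rec := (phi_rec m N v pinit dP K).
Local Notation g_rec := (g_rec m N v pinit dP K).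

Lemma phi_rec_stop fuel t k dl :
  (k + dl <= m)%N -> phi_rec fuel t k dl = payoff t.-1 k.
Proof. by move=> stop; case: fuel => /=; rewrite stop. Qed.

Lemma g_rec_stop fuel t k dl :
  (k + dl <= m)%N -> g_rec fuel t k dl = payoff t.-1 k.
Proof. by move=> stop; case: fuel => /=; rewrite stop. Qed.

Lemma phi_rec_le_myopic fuel t k dl : (1 <= t)%N -> (dl <= N)%N ->
  phi_rec fuel t k dl <= payoff t.-1 (sigma t.-1).
Proof.
elim: fuel t k dl => [|f IH] t k dl t1 dlN; case: (leqP (k + dl) m) => [stop|cont];
  try by rewrite phi_rec_stop // payoff_le_sigmav // (leq_trans (leq_addr _ _) stop).
all: rewrite /= leqNgt cont /=.
  exact: payoff_sigmav_ge0.
apply: maxupto_le => u _.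
apply: kernel_sum_le => // i iN; apply: le_trans (IH t.+1 u i isT iN) _ => /=.
apply: le_trans (payoff_nonincreasing _ (leq_pred t)) _.
exact: payoff_le_sigmav (sigmav_le _).
Qed.

Lemma g_rec_le_phi_rec fuel t k dl : (1 <= t)%N -> (dl <= N)%N ->
  g_rec fuel t k dl <= phi_rec fuel t k dl.
Proof.
elim: fuel t k dl => [|f IH] t k dl t1 dlN /=; case: ifP => // _.
apply: maxupto_le_maxupto => u uk; exists u; first exact: leq_trans uk (geq_minl _ _).
by apply: ler_weighted_sum (kernel_ge0 K_stochastic t1 dlN) _ => i iN; apply: IH.
Qed.

Lemma phi_rec_le_g_rec_stop fuel t k dl : (1 <= t)%N -> (dl <= N)%N ->
  (minn k (sigma t.-1) + dl <= m)%N ->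
  phi_rec fuel t k dl <= g_rec fuel t (minn k (sigma t.-1)) dl.
Proof.
move=> t1 dlN; case: (leqP k (sigma t.-1)) => _ stop; rewrite g_rec_stop //.
  by rewrite phi_rec_stop.
exact: phi_rec_le_myopic.
Qed.

Lemma phi_rec_le_g_rec fuel t k dl : (1 <= t)%N -> (dl <= N)%N ->
  phi_rec fuel t k dl <= g_rec fuel t (minn k (sigma t.-1)) dl.
Proof.
elim: fuel t k dl => [|f IH] t k dl t1 dlN;
  have [stop|cont] := leqP (minn k (sigma t.-1) + dl) m;
  try exact: phi_rec_le_g_rec_stop.
all: have kcont : (m < k + dl)%N by apply: leq_trans cont _; rewrite leq_add2r geq_minl.
all: rewrite /= leqNgt kcont leqNgt cont //=.
have sigma_t : (sigma t <= sigma t.-1)%N by rewrite -{1}(prednK t1) sigmav_nonincreasing.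
apply: maxupto_le_maxupto => u uk; exists (minn u (sigma t)).
  rewrite -minnA (minn_idPr sigma_t) leq_min geq_minr andbT.
  exact: leq_trans (geq_minl _ _) uk.
by apply: ler_weighted_sum (kernel_ge0 K_stochastic t1 dlN) _ => i iN; apply: IH.
Qed.

End ValueFunctions.

Theorem mainTheorem10 (R : realType) (n m : nat) (pinit dP : R)
  (v : nat -> R) (d : measure_display) (Omega : measurableType d)
  (P : probability Omega R) (Z : nat -> Omega -> R)
  (K : nat -> nat -> nat -> R) :
  let N := ((n - 1) * m)%N in
  let p := price pinit dP in
  let Rb := Rbar v pinit dP in
  let sigma := sigmav m v pinit dP in
  let dem := demand N Z in
  (2 <= n)%N -> (1 <= m)%N ->
  0 <= pinit -> 0 < dP ->
  v 0%N = 0 ->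
  (forall u, (u < m)%N -> v u <= v u.+1) ->
  (forall u, (u.+2 <= m)%N -> v u.+2 - v u.+1 <= v u.+1 - v u) ->
  (1 <= Num.ceil ((v 1%N - pinit) / dP))%R ->
  (forall j, measurable_fun setT (Z j)) ->
  {ae P, forall w, (forall j, (1 <= j < N)%N -> Z j.+1 w <= Z j w) /\
                   (forall j, (1 <= j <= N)%N -> 0 <= Z j w)} ->
  (forall t dl, (1 <= t)%N -> (dl <= N)%N ->
     (forall dl', 0 <= K t dl' dl) /\
     (forall dl', (dl < dl')%N -> K t dl' dl = 0) /\
     \sum_(dl' < dl.+1) K t dl' dl = 1) ->
  (forall t dl dl', (1 <= t)%N -> (dl <= N)%N -> (dl' <= N)%N ->
     (0 < P [set w | dem (p t.-1) w = dl])%E ->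
     K t dl' dl = fine (P ([set w | dem (p t) w = dl'] `&` [set w | dem (p t.-1) w = dl]))
                  / fine (P [set w | dem (p t.-1) w = dl])) ->
  let phi0 := fun k => maxupto k (fun u =>
        \sum_(dl' < N.+1) fine (P [set w | dem (p 0%N) w = dl']) * phi m N v pinit dP K 1 u dl') in
  let g0 := fun k => maxupto k (fun u =>
        \sum_(dl' < N.+1) fine (P [set w | dem (p 0%N) w = dl']) * gv m N v pinit dP K 1 u dl') in
  (forall k, (k <= m)%N -> phi0 k = g0 k) /\
  (forall t k dl, (1 <= t <= Rb)%N -> (k <= m)%N -> (dl <= N)%N ->
     phi m N v pinit dP K t k dl <= gv m N v pinit dP K t (minn k (sigma t.-1)) dl /\
     gv m N v pinit dP K t (minn k (sigma t.-1)) dl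
       <= phi m N v pinit dP K t (minn k (sigma t.-1)) dl).
Proof.
move=> N p Rb sigma dem _ _ _ dP_gt0 v0 _ _ _ _ _ K_stochastic _ phi0 g0.
have phi_le_g := phi_rec_le_g_rec m pinit dP_gt0 v0 K_stochastic.
have g_le_phi := g_rec_le_phi_rec m v pinit dP K_stochastic.
have weight_ge0 i : 0 <= fine (P [set w | dem (p 0%N) w = i]).
  by apply: fine_ge0; apply: measure_ge0.
split=> [k _|t k dl /andP[t1 _] _ dlN];
  last by split; [apply: phi_le_g | apply: g_le_phi].
apply/le_anti/andP; split; apply: maxupto_le_maxupto => u uk.
  exists (minn u (sigma 0%N)); first exact: leq_trans (geq_minl _ _) uk.
  by apply: ler_weighted_sum weight_ge0 _ => i iN; apply: phi_le_g.
by exists u => //; apply: ler_weighted_sum weight_ge0 _ => i iN; apply: g_le_phi.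
Qed.
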